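(* Let $G(\mathcal Y)$ be a developable complex of groups over a connected scwol $\mathcal Y$, let $T$ be a maximal tree in $\mathcal Y$, and identify each local group $G_\sigma$ with its image in $\pi_1(G(\mathcal Y),T)$ under $\iota_T$. Let $N_T$ be the kernel of the action homomorphism $\pi_1(G(\mathcal Y),T)\to\mathrm{Aut}(D(\mathcal Y,T))$. Then: (1) $N_T\le G_\sigma$ for every $\sigma\in V(\mathcal Y)$; (2) $\psi_a(N_T)=N_T$ for every $a\in E(\mathcal Y)$; (3) $N_T\trianglelefteq G_\sigma$ for every $\sigma\in V(\mathcal Y)$; (4) if $N'$ is any subgroup of $\pi_1(G(\mathcal Y),T)$ with $N'\le G_\sigma$ and $N'\trianglelefteq G_\sigma$ for every $\sigma\in V(\mathcal Y)$ and $\psi_a(N')=N'$ for every $a\in E(\mathcal Y)$, then $N'\le N_T$.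
   Context: Scwols. A scwol $\mathcal X$ consists of a set $V(\mathcal X)$ of vertices, a set $E(\mathcal X)$ of edges, maps $i,t:E(\mathcal X)\to V(\mathcal X)$, and a composition $(a,b)\mapsto ab\in E(\mathcal X)$ defined on $E^{(2)}(\mathcal X)=\{(a,b): i(a)=t(b)\}$, such that $i(ab)=i(b)$, $t(ab)=t(a)$, $(ab)c=a(bc)$ whenever defined, and $i(a)\neq t(a)$ for all $a$. For a vertex $\alpha$ put $i(\alpha)=t(\alpha)=\alpha$. The geometric realization $|\mathcal X|$ has one $k$-simplex for each sequence of $k$ composable edges; $\mathcal X$ is connected if $|\mathcal X|$ is. A maximal tree in $\mathcal X$ means a maximal tree in the 1-skeleton of $|\mathcal X|$. Complexes of groups. A complex of groups $G(\mathcal Y)=(G_\sigma,\psi_a,g_{a,b})$ over a scwol $\mathcal Y$ consists of groups $G_\sigma$ ($\sigma\in V(\mathcal Y)$), injective homomorphisms $\psi_a:G_{i(a)}\to G_{t(a)}$ ($a\in E(\mathcal Y)$) and elements $g_{a,b}\in G_{t(a)}$ ($(a,b)\in E^{(2)}(\mathcal Y)$) with $\mathrm{Ad}(g_{a,b})\psi_{ab}=\psi_a\psi_b$ and $\psi_a(g_{b,c})g_{a,bc}=g_{a,b}g_{ab,c}$. It is developable if it is isomorphic to the complex of groups associated to an action of a group on a scwol; for developable $G(\mathcal Y)$ over connected $\mathcal Y$, the maps $G_\sigma\to\pi_1(G(\mathcal Y),T)$ are injective. Fundamental group and universal cover. The universal group $FG(\mathcal Y)$ is generated by $\bigsqcup_\sigma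 G_\sigma$ and symbols $a^+,a^-$ ($a\in E(\mathcal Y)$) subject to: the relations of each $G_\sigma$; $(a^\pm)^{-1}=a^\mp$; $a^+b^+=g_{a,b}(ab)^+$ for $(a,b)\in E^{(2)}(\mathcal Y)$; $\psi_a(g)=a^+ga^-$ for $g\in G_{i(a)}$. For a maximal tree $T$ in $\mathcal Y$, $\pi_1(G(\mathcal Y),T)$ is the quotient of $FG(\mathcal Y)$ by the additional relations $a^+=1$ for $a$ in $T$; $\iota_T$ sends $g\in G_\sigma$ to its image and $a$ to the image of $a^+$. The universal cover $D(\mathcal Y,T)$ is the scwol with vertices $([g],\sigma)$, $\sigma\in V(\mathcal Y)$, $[g]\in \pi_1(G(\mathcal Y),T)/\iota_T(G_\sigma)$, edges $([g],a)$, $a\in E(\mathcal Y)$, $[g]\in\pi_1(G(\mathcal Y),T)/\iota_T(G_{i(a)})$, $i([g],a)=([g],i(a))$, $t([g],a)=([g\,\iota_T(a)^{-1}],t(a))$, and $([g],a)([h],b)=([h],ab)$ when $(a,b)\in E^{(2)}(\mathcal Y)$ and $g^{-1}h\,\iota_T(b)^{-1}\in\iota_T(G_{i(a)})$; $\pi_1(G(\mathcal Y),T)$ acts by $h\cdot([g],\alpha)=([hg],\alpha)$. *)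

From Stdlib Require Import List.
Import ListNotations.
Set Implicit Arguments.

Record Group := {
  carrier :> Type;
  gop : carrier -> carrier -> carrier;
  gone : carrier;
  ginv : carrier -> carrier;
  gop_assoc : forall x y z, gop x (gop y z) = gop (gop x y) z;
  gop_1l : forall x, gop gone x = x;
  gop_1r : forall x, gop x gone = x;
  gop_Vl : forall x, gop (ginv x) x = gone;
  gop_Vr : forall x, gop x (ginv x) = gone }.
Arguments gop {g}.
Arguments gone {g}.
Arguments ginv {g}.

(* composition is a total function, only meaningful on composable pairs
   (i(a) = t(b)); all axioms are stated only for composable pairs. *)
Record Scwol := {
  sV : Type;
  sE : Type;
  ini : sE -> sV;
  ter : sE -> sV;
  cmp : sE -> sE -> sE;
  cmp_ini : forall a b, ini a = ter b -> ini (cmp a b) = ini b;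
  cmp_ter : forall a b, ini a = ter b -> ter (cmp a b) = ter a;
  cmp_assoc : forall a b c, ini a = ter b -> ini b = ter c ->
      cmp (cmp a b) c = cmp a (cmp b c);
  no_loop : forall a, ini a <> ter a }.
Arguments cmp_ini {s a b}.
Arguments cmp_ter {s a b}.

Inductive reach (Y : Scwol) (ES : sE Y -> Prop) : sV Y -> sV Y -> Prop :=
| reach_refl v : reach Y ES v v
| reach_fwd u a : ES a -> reach Y ES u (ini Y a) -> reach Y ES u (ter Y a)
| reach_bwd u a : ES a -> reach Y ES u (ter Y a) -> reach Y ES u (ini Y a).

Arguments reach {Y}.

(* |Y| is connected iff its 1-skeleton is connected *)
Definition connected (Y : Scwol) : Prop :=
  forall u v : sV Y, reach (fun _ => True) u v.

(* a subtree (VS, ES) of the 1-skeleton of |Y| : nonempty, connected,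
   and acyclic (every edge is a bridge, i.e. lies on no cycle) *)
Definition is_tree (Y : Scwol) (VS : sV Y -> Prop) (ES : sE Y -> Prop) : Prop :=
  (exists v, VS v) /\
  (forall a, ES a -> VS (ini Y a) /\ VS (ter Y a)) /\
  (forall u v, VS u -> VS v -> reach ES u v) /\
  (forall a, ES a -> ~ reach (fun b => ES b /\ b <> a) (ini Y a) (ter Y a)).

Arguments is_tree {Y}.

(* a maximal tree: a subtree not strictly contained in any other;
   it is given by its edge set T *)
Definition maximal_tree {Y : Scwol} (T : sE Y -> Prop) : Prop :=
  exists VS : sV Y -> Prop, is_tree VS T /\
    forall (VS' : sV Y -> Prop) (ES' : sE Y -> Prop), is_tree VS' ES' ->
      (forall v, VS v -> VS' v) -> (forall a, T a -> ES' a) ->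
      (forall v, VS' v -> VS v) /\ (forall a, ES' a -> T a).

Definition gcast {I : Type} (G : I -> Group) {s t : I} (e : s = t) (x : G s) : G t :=
  eq_rect s (fun s => carrier (G s)) x t e.

Record Complex (Y : Scwol) := {
  grp : sV Y -> Group;
  psi : forall a : sE Y, grp (ini Y a) -> grp (ter Y a);
  gab : forall a b : sE Y, grp (ter Y a);   (* g_{a,b}, used for i(a)=t(b) *)
  psi_mul : forall a x y, psi a (gop x y) = gop (psi a x) (psi a y);
  psi_inj : forall a x y, psi a x = psi a y -> x = y;
  (* Ad(g_{a,b}) psi_{ab} = psi_a psi_b *)
  psi_compat : forall (a b : sE Y) (h : ini Y a = ter Y b) (x : grp (ini Y b)),
      gop (gop (gab a b)
               (gcast grp (cmp_ter h) (psi (cmp Y a b) (gcast grp (eq_sym (cmp_ini h)) x))))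
          (ginv (gab a b))
      = psi a (gcast grp (eq_sym h) (psi b x));
  (* psi_a(g_{b,c}) g_{a,bc} = g_{a,b} g_{ab,c} *)
  cocycle : forall (a b c : sE Y) (hab : ini Y a = ter Y b) (hbc : ini Y b = ter Y c),
      gop (psi a (gcast grp (eq_sym hab) (gab b c))) (gab a (cmp Y b c))
      = gop (gab a b) (gcast grp (cmp_ter hab) (gab (cmp Y a b) c)) }.
Arguments grp {Y}.
Arguments psi {Y}.
Arguments gab {Y}.

Unset Implicit Arguments.
Section Pi1.
Variables (Y : Scwol) (CG : Complex Y) (T : sE Y -> Prop).

(* generators of FG(Y): elements of the local groups, and a^+ (true), a^- (false) *)
Inductive gen : Type :=
| GV (s : sV Y) (x : grp CG s)
| GE (a : sE Y) (sgn : bool).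
Arguments GV {s}.

(* a letter is a generator (true) or its formal inverse (false) *)
Definition letter := (gen * bool)%type.
Definition word := list letter.
Definition flip (l : letter) : letter := (fst l, negb (snd l)).
Definition winv (w : word) : word := rev (map flip w).

Inductive relator : word -> Prop :=
| rel_mul s (x y : grp CG s) :
    relator [(GV x, true); (GV y, true); (GV (gop x y), false)]
| rel_pm a : relator [(GE a true, true); (GE a false, true)]
| rel_comp a b : ini Y a = ter Y b ->
    relator [(GE a true, true); (GE b true, true); (GE (cmp Y a b) true, false);
             (GV (gab CG a b), false)]
| rel_psi a (x : grp CG (ini Y a)) :
    relator [(GV (psi CG a x), true); (GE a false, false); (GV x, false);
             (GE a true, false)]
| rel_tree a : T a -> relator [(GE a true, true)].

(* equality in pi_1(G(Y),T): the congruence on words generated by free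
   cancellation and the relators *)
Inductive weq : word -> word -> Prop :=
| weq_refl w : weq w w
| weq_sym u v : weq u v -> weq v u
| weq_trans u v w : weq u v -> weq v w -> weq u w
| weq_cat u u' v v' : weq u u' -> weq v v' -> weq (u ++ v) (u' ++ v')
| weq_free l : weq [l; flip l] []
| weq_rel r : relator r -> weq r [].

Definition iotaV (s : sV Y) (x : grp CG s) : word := [(GV x, true)].
Arguments iotaV {s}.
Definition iotaE (a : sE Y) : word := [(GE a true, true)].

(* subgroups of pi_1 (as weq-closed sets of words) *)
Definition is_subgroup (P : word -> Prop) : Prop :=
  (forall u v, weq u v -> P u -> P v) /\ P [] /\
  (forall u v, P u -> P v -> P (u ++ v)) /\ (forall u, P u -> P (winv u)).

(* ----- the universal cover D(Y,T): vertices ([g],s), edges ([g],a) ----- *)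
Definition Dvert := (word * sV Y)%type.
Definition Dedge := (word * sE Y)%type.
(* equality of vertices/edges: same s (resp. a), same left coset
   g iota_T(G_s) (resp. g iota_T(G_{i(a)})) *)
Definition Dvert_eq (v w : Dvert) : Prop :=
  snd v = snd w /\ exists x : grp CG (snd v), weq (fst w) (fst v ++ iotaV x).
Definition Dedge_eq (e f : Dedge) : Prop :=
  snd e = snd f /\ exists x : grp CG (ini Y (snd e)), weq (fst f) (fst e ++ iotaV x).
Definition D_ini (e : Dedge) : Dvert := (fst e, ini Y (snd e)).
Definition D_ter (e : Dedge) : Dvert := (fst e ++ winv (iotaE (snd e)), ter Y (snd e)).
Definition actV (h : word) (v : Dvert) : Dvert := (h ++ fst v, snd v).
Definition actE (h : word) (e : Dedge) : Dedge := (h ++ fst e, snd e).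

Definition N_T (h : word) : Prop :=
  (forall v, Dvert_eq (actV h v) v) /\ (forall e, Dedge_eq (actE h e) e).

(* iota_T is injective on each local group (G_s identified with its image) *)
Definition iota_injective : Prop :=
  forall s (x y : grp CG s), weq (iotaV x) (iotaV y) -> x = y.

Definition sub_local (P : word -> Prop) (s : sV Y) : Prop :=
  forall h, P h -> exists x : grp CG s, weq h (iotaV x).
Definition normalised_by_local (P : word -> Prop) (s : sV Y) : Prop :=
  forall (x : grp CG s) h, P h -> P (iotaV x ++ h ++ winv (iotaV x)).
(* psi_a(P) = P, for P <= G_{i(a)}, both sides viewed in pi_1 *)
Definition psi_stable (P : word -> Prop) (a : sE Y) : Prop :=
  forall y, P y <-> exists x : grp CG (ini Y a), P (iotaV x) /\ weq y (iotaV (psi CG a x)).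

End Pi1.
Arguments gen {Y}.
Arguments letter {Y}.
Arguments word {Y}.
Arguments flip {Y}.
Arguments winv {Y}.
Arguments relator {Y}.
Arguments weq {Y}.
Arguments iotaV {Y} CG {s}.
Arguments iotaE {Y}.
Arguments is_subgroup {Y}.
Arguments Dvert {Y}.
Arguments Dedge {Y}.
Arguments Dvert_eq {Y}.
Arguments Dedge_eq {Y}.
Arguments D_ini {Y}.
Arguments D_ter {Y}.
Arguments actV {Y}.
Arguments actE {Y}.
Arguments N_T {Y}.
Arguments iota_injective {Y}.
Arguments sub_local {Y}.
Arguments normalised_by_local {Y}.
Arguments psi_stable {Y}.
Arguments GV {Y CG s}.
Arguments GE {Y CG}.

(* A word h lies in N_T iff h g G_s = g G_s for every g and s, i.e. h lies in
   every conjugate g G_s g^-1.  Taking g = 1 gives N_T <= G_s; N_T is normal in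
   pi_1, and since psi_a(x) = a^+ x a^- in pi_1, normality together with
   N_T <= G_{i(a)} gives psi_a(N_T) = N_T.  Conversely, a subgroup N' lying in
   every G_s, normalised by every G_s and stable under every psi_a is normalised
   by every generator of pi_1, hence is normal, hence lies in every g G_s g^-1. *)
From Stdlib Require Import List Setoid Morphisms.
Import ListNotations.

Section Pi1Words.
Context {Y : Scwol} (CG : Complex Y) (T : sE Y -> Prop).

Notation W := (@word Y CG).
Notation "u ~~ v" := (weq CG T u v) (at level 70).

#[global] Instance weq_Equivalence : Equivalence (weq CG T).
Proof. split; red; eauto using weq_refl, weq_sym, weq_trans. Qed.

#[global] Instance app_weq_Proper :
  Proper (weq CG T ==> weq CG T ==> weq CG T) (@app (@letter Y CG)).
Proof. intros u u' Hu v v' Hv; apply weq_cat; assumption. Qed.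

Lemma winv_app (u v : W) : winv CG (u ++ v) = winv CG v ++ winv CG u.
Proof. unfold winv; rewrite map_app, rev_app_distr; reflexivity. Qed.

Lemma flipK (l : @letter Y CG) : flip CG (flip CG l) = l.
Proof. destruct l as [g b]; unfold flip; simpl; rewrite Bool.negb_involutive; reflexivity. Qed.

Lemma winvK (u : W) : winv CG (winv CG u) = u.
Proof.
  unfold winv; rewrite map_rev, rev_involutive, map_map.
  induction u as [|l u IH]; simpl; [reflexivity|].
  rewrite flipK, IH; reflexivity.
Qed.

Lemma app_winv (w : W) : w ++ winv CG w ~~ [].
Proof.
  induction w as [|l w IH]; [reflexivity|].
  change (winv CG (l :: w)) with (winv CG w ++ [flip CG l]).
  replace ((l :: w) ++ winv CG w ++ [flip CG l])
    with ([l] ++ (w ++ winv CG w) ++ [flip CG l])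
    by (simpl; rewrite <- app_assoc; reflexivity).
  rewrite IH; apply weq_free.
Qed.

Lemma winv_app_self (w : W) : winv CG w ++ w ~~ [].
Proof. rewrite <- (winvK w) at 2; apply app_winv. Qed.

Lemma weq_winv (u v : W) : u ~~ v -> winv CG u ~~ winv CG v.
Proof.
  induction 1 as [| | |u u' v v' _ IHu _ IHv|l|r Hr].
  - reflexivity.
  - symmetry; assumption.
  - etransitivity; eassumption.
  - rewrite !winv_app, IHu, IHv; reflexivity.
  - unfold winv; simpl; rewrite flipK; apply weq_free.
  - transitivity (winv CG r ++ r).
    + rewrite <- (app_nil_r (winv CG r)) at 1.
      apply weq_cat; [reflexivity|symmetry; exact (weq_rel _ _ _ _ Hr)].
    + apply winv_app_self.
Qed.

#[global] Instance winv_weq_Proper : Proper (weq CG T ==> weq CG T) (winv CG).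
Proof. intros u v; apply weq_winv. Qed.

Lemma weq_of_app_winv (u w : W) : u ++ winv CG w ~~ [] -> u ~~ w.
Proof.
  intro H; transitivity (u ++ winv CG w ++ w).
  - rewrite winv_app_self, app_nil_r; reflexivity.
  - rewrite app_assoc, H; reflexivity.
Qed.

Lemma iotaV_mul (s : sV Y) (x y : grp CG s) :
  iotaV CG x ++ iotaV CG y ~~ iotaV CG (gop x y).
Proof. apply weq_of_app_winv, (weq_rel _ _ _ _ (rel_mul _ CG T s x y)). Qed.

Lemma iotaV_one (s : sV Y) : iotaV CG (gone : grp CG s) ~~ [].
Proof.
  set (e := iotaV CG (gone : grp CG s)).
  transitivity (e ++ e ++ winv CG e).
  - rewrite app_winv, app_nil_r; reflexivity.
  - rewrite app_assoc; unfold e; rewrite iotaV_mul, gop_1l; apply app_winv.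
Qed.

Lemma iotaV_mulV (s : sV Y) (x : grp CG s) : iotaV CG x ++ iotaV CG (ginv x) ~~ [].
Proof. rewrite iotaV_mul, gop_Vr; apply iotaV_one. Qed.

Lemma winv_iotaV (s : sV Y) (x : grp CG s) : winv CG (iotaV CG x) ~~ iotaV CG (ginv x).
Proof.
  symmetry; apply weq_of_app_winv.
  rewrite winvK, iotaV_mul, gop_Vl; apply iotaV_one.
Qed.

Lemma edge_minus (a : sE Y) : [(@GE Y CG a false, true)] ~~ winv CG (iotaE CG a).
Proof.
  transitivity (winv CG (iotaE CG a) ++ iotaE CG a ++ [(GE a false, true)]).
  - rewrite app_assoc, winv_app_self; reflexivity.
  - change (iotaE CG a ++ [(GE a false, true)])
      with [(@GE Y CG a true, true); (GE a false, true)].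
    rewrite (weq_rel _ _ _ _ (rel_pm _ CG T a)), app_nil_r; reflexivity.
Qed.

Lemma iotaV_psi (a : sE Y) (x : grp CG (ini Y a)) :
  iotaV CG (psi CG a x) ~~ iotaE CG a ++ iotaV CG x ++ winv CG (iotaE CG a).
Proof.
  rewrite <- edge_minus; apply weq_of_app_winv.
  exact (weq_rel _ _ _ _ (rel_psi _ CG T a x)).
Qed.

Definition weq_closed (P : W -> Prop) : Prop := forall u v, u ~~ v -> P u -> P v.

Definition normalised_by (P : W -> Prop) (k : W) : Prop :=
  forall n, P n -> P (k ++ n ++ winv CG k).

Lemma normalised_by_weq (P : W -> Prop) (k k' : W) :
  weq_closed P -> k ~~ k' -> normalised_by P k -> normalised_by P k'.
Proof.
  intros HP E Hk n Hn; apply (HP (k ++ n ++ winv CG k)); [|exact (Hk n Hn)].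
  rewrite E; reflexivity.
Qed.

Lemma normalised_by_nil (P : W -> Prop) : normalised_by P [].
Proof. intros n Hn; rewrite app_nil_r; exact Hn. Qed.

Lemma normalised_by_app (P : W -> Prop) (u v : W) :
  normalised_by P u -> normalised_by P v -> normalised_by P (u ++ v).
Proof.
  intros Hu Hv n Hn; rewrite winv_app.
  replace ((u ++ v) ++ n ++ winv CG v ++ winv CG u)
    with (u ++ (v ++ n ++ winv CG v) ++ winv CG u) by (rewrite <- !app_assoc; reflexivity).
  apply Hu, Hv, Hn.
Qed.

Lemma normalised_by_words (P : W -> Prop) :
  (forall l, normalised_by P [l]) -> forall k, normalised_by P k.
Proof.
  intros Hl k; induction k as [|l k IH].
  - apply normalised_by_nil.
  - apply (normalised_by_app P [l] k); auto.
Qed.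

(* [h] moves every vertex [(g, s)] of D(Y,T) into its own class; the condition
   on edges is the special case [s = i(a)]. *)
Definition acts_trivially (h : W) : Prop :=
  forall g (s : sV Y), exists x : grp CG s, g ~~ h ++ g ++ iotaV CG x.

Lemma N_T_iff (h : W) : N_T CG T h <-> acts_trivially h.
Proof.
  split.
  - intros [HV _] g s; destruct (HV (g, s)) as [_ [x Hx]]; exists x.
    simpl in Hx; rewrite <- app_assoc in Hx; exact Hx.
  - intros H; split.
    + intros [g s]; split; [reflexivity|]; destruct (H g s) as [x Hx].
      exists x; simpl; rewrite <- app_assoc; exact Hx.
    + intros [g a]; split; [reflexivity|]; destruct (H g (ini Y a)) as [x Hx].
      exists x; simpl; rewrite <- app_assoc; exact Hx.
Qed.

Lemma N_T_weq_closed : weq_closed (N_T CG T).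
Proof.
  intros u v E Hu; apply N_T_iff in Hu; apply N_T_iff; intros g s.
  destruct (Hu g s) as [x Hx]; exists x; rewrite <- E; exact Hx.
Qed.

Lemma N_T_normal (k : W) : normalised_by (N_T CG T) k.
Proof.
  intros h Hh; apply N_T_iff in Hh; apply N_T_iff; intros g s.
  destruct (Hh (winv CG k ++ g) s) as [x Hx]; exists x.
  transitivity (k ++ (winv CG k ++ g)).
  - rewrite app_assoc, app_winv; reflexivity.
  - rewrite Hx, !app_assoc; reflexivity.
Qed.

Lemma N_T_sub_local (s : sV Y) : sub_local CG T (N_T CG T) s.
Proof.
  intros h Hh; apply N_T_iff in Hh; destruct (Hh [] s) as [x Hx].
  exists (ginv x); simpl in Hx.
  rewrite <- (app_nil_r h) at 1; rewrite <- (iotaV_mulV s x), app_assoc, <- Hx.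
  reflexivity.
Qed.

Lemma N_T_subgroup : is_subgroup CG T (N_T CG T).
Proof.
  split; [exact N_T_weq_closed|split; [|split]].
  - apply N_T_iff; intros g s; exists gone.
    rewrite iotaV_one, app_nil_r; reflexivity.
  - intros u v Hu Hv; apply N_T_iff in Hu, Hv; apply N_T_iff; intros g s.
    destruct (Hv g s) as [x Hx], (Hu (v ++ g) s) as [y Hy]; exists (gop y x).
    rewrite Hx at 1; rewrite app_assoc, Hy at 1.
    rewrite <- iotaV_mul, !app_assoc; reflexivity.
  - intros u Hu; apply N_T_iff in Hu; apply N_T_iff; intros g s.
    destruct (Hu g s) as [x Hx]; exists (ginv x).
    rewrite Hx at 2; rewrite !app_assoc, <- (app_assoc _ (iotaV CG x)).
    rewrite iotaV_mulV, app_nil_r, winv_app_self; reflexivity.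
Qed.

Lemma normal_sub_local_psi_stable (P : W -> Prop) (a : sE Y) :
  weq_closed P -> (forall k, normalised_by P k) -> sub_local CG T P (ini Y a) ->
  psi_stable CG T P a.
Proof.
  intros HP Hnormal Hsub y; split.
  - intros Hy.
    pose proof (Hnormal (winv CG (iotaE CG a)) y Hy) as Hz; rewrite winvK in Hz.
    destruct (Hsub _ Hz) as [x Hx]; exists x; split; [exact (HP _ _ Hx Hz)|].
    rewrite iotaV_psi, <- Hx, !app_assoc, app_winv, <- !app_assoc, app_winv.
    rewrite app_nil_r; reflexivity.
  - intros [x [Hx E]]; apply (HP _ _ (symmetry E)).
    apply (HP _ _ (symmetry (iotaV_psi a x))), Hnormal, Hx.
Qed.

Lemma normal_sub_local_acts_trivially (P : W -> Prop) :
  (forall u, P u -> P (winv CG u)) -> (forall k, normalised_by P k) ->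
  (forall s, sub_local CG T P s) -> forall h, P h -> acts_trivially h.
Proof.
  intros Hinv Hnormal Hsub h Hh g s.
  pose proof (Hnormal (winv CG g) _ (Hinv h Hh)) as Hconj; rewrite winvK in Hconj.
  destruct (Hsub s _ Hconj) as [x Hx]; exists x.
  rewrite <- Hx, !app_assoc, <- (app_assoc h g), app_winv, app_nil_r, app_winv.
  reflexivity.
Qed.

(* Normalising by [a^+] and by [(a^+)^-1 = a^-] is exactly the two directions of
   [psi_a(P) = P], using [psi_a(x) = a^+ x a^-]. *)
Lemma psi_stable_normal (P : W -> Prop) :
  is_subgroup CG T P ->
  (forall s, sub_local CG T P s /\ normalised_by_local CG P s) ->
  (forall a, psi_stable CG T P a) -> forall k, normalised_by P k.
Proof.
  intros [HP _] Hlocal Hpsi.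
  assert (Hplus : forall a, normalised_by P (iotaE CG a)).
  { intros a n Hn; destruct (proj1 (Hlocal (ini Y a)) n Hn) as [x Hx].
    apply (proj2 (Hpsi a _)); exists x; split.
    - exact (HP _ _ Hx Hn).
    - rewrite iotaV_psi, Hx; reflexivity. }
  assert (Hminus : forall a, normalised_by P (winv CG (iotaE CG a))).
  { intros a n Hn; destruct (proj1 (Hpsi a n) Hn) as [x [Hx E]].
    apply (HP (iotaV CG x)); [|exact Hx].
    rewrite E, iotaV_psi, winvK, !app_assoc, winv_app_self, <- !app_assoc,
      winv_app_self, app_nil_r; reflexivity. }
  apply normalised_by_words; intros [[s x|a [|]] [|]].
  - exact (proj2 (Hlocal s) x).
  - apply (normalised_by_weq P (iotaV CG (ginv x))); [exact HP| |exact (proj2 (Hlocal s) _)].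
    rewrite <- winv_iotaV; reflexivity.
  - apply Hplus.
  - apply Hminus.
  - apply (normalised_by_weq P (winv CG (iotaE CG a))); [exact HP| |apply Hminus].
    rewrite edge_minus; reflexivity.
  - apply (normalised_by_weq P (iotaE CG a)); [exact HP| |apply Hplus].
    change [(@GE Y CG a false, false)] with (winv CG [(@GE Y CG a false, true)]).
    rewrite edge_minus, winvK; reflexivity.
Qed.

End Pi1Words.

Theorem mainTheorem3 (Y : Scwol) (CG : Complex Y) (T : sE Y -> Prop) :
  connected Y -> maximal_tree T ->
  (* developability: G_s -> pi_1(G(Y),T) injective, so G_s is identified with its image *)
  iota_injective CG T ->
  (* (1) *) (forall s, sub_local CG T (N_T CG T) s) /\
  (* (2) *) (forall a, psi_stable CG T (N_T CG T) a) /\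
  (* (3) *) (is_subgroup CG T (N_T CG T) /\
             forall s, normalised_by_local CG (N_T CG T) s) /\
  (* (4) *) (forall N' : word CG -> Prop, is_subgroup CG T N' ->
               (forall s, sub_local CG T N' s /\ normalised_by_local CG N' s) ->
               (forall a, psi_stable CG T N' a) ->
               forall h, N' h -> N_T CG T h).
Proof.
  intros _ _ _; split; [|split; [|split]].
  - apply N_T_sub_local.
  - intros a; apply (normal_sub_local_psi_stable CG T);
      [apply N_T_weq_closed | apply N_T_normal | apply N_T_sub_local].
  - split; [apply N_T_subgroup|intros s x; apply N_T_normal].
  - intros N' HN' Hlocal Hpsi h Hh; apply N_T_iff.
    apply (normal_sub_local_acts_trivially CG T N');
      [apply HN' | apply (psi_stable_normal CG T); auto | apply Hlocal | exact Hh].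
Qed.
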